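(* Let $L$ be a doubly even code of length $n$ and let $\phi\colon E_n\to SO_n$ be the homomorphism $\phi(i_1,\dots,i_n)=\operatorname{diag}\bigl((-1)^{i_1},\dots,(-1)^{i_n}\bigr)$. Then $\phi(L)$ has a finite centralizer in $SO_n$ if and only if a generator matrix of $L$ has distinct columns.
   Context: $k$ is an algebraically closed field of characteristic $0$ and $SO_n=SO_n(k)$. $E_n\subset(\mathbb{Z}/2\mathbb{Z})^n$ is the subgroup of vectors of even weight, where the weight of a vector is its number of coordinates equal to $1$. A doubly even code of length $n$ is a $\mathbb{Z}/2\mathbb{Z}$-subspace $L\subset(\mathbb{Z}/2\mathbb{Z})^n$ in which every element has weight divisible by $4$. A generator matrix of $L$ is a matrix over $\mathbb{Z}/2\mathbb{Z}$ with $n$ columns whose rows span $L$. *)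

From HB Require Import structures.
From mathcomp Require Import all_boot all_order all_algebra all_fingroup.
Set Implicit Arguments. Unset Strict Implicit. Unset Printing Implicit Defensive.
Import GRing.Theory.
Local Open Scope ring_scope.

Definition weight n (v : 'rV['F_2]_n) : nat := #|[set i : 'I_n | v 0 i != 0]|.

Definition E_n n : {set 'rV['F_2]_n} := [set v | ~~ odd (weight v)].

Definition is_subspace n (L : {set 'rV['F_2]_n}) : Prop :=
  0 \in L /\ (forall u v, u \in L -> v \in L -> u + v \in L).

Definition doubly_even n (L : {set 'rV['F_2]_n}) : Prop :=
  is_subspace L /\ (forall v, v \in L -> (4 %| weight v)%N).

Definition generator_matrix n m (G : 'M['F_2]_(m, n)) (L : {set 'rV['F_2]_n}) : Prop :=
  forall v : 'rV['F_2]_n, v \in L <-> (v <= G)%MS.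

Definition distinct_columns n m (G : 'M['F_2]_(m, n)) : Prop :=
  forall j1 j2 : 'I_n, col j1 G = col j2 G -> j1 = j2.

Definition inSO (k : fieldType) n (M : 'M[k]_n) : bool :=
  (M^T *m M == 1%:M) && (\det M == 1).

Definition phi (k : fieldType) n (v : 'rV['F_2]_n) : 'M[k]_n :=
  diag_mx (\row_i ((-1) ^+ (nat_of_ord (v 0 i)))).

Definition centralizer_SO (k : fieldType) n (L : {set 'rV['F_2]_n}) (M : 'M[k]_n) : Prop :=
  inSO M /\ (forall v, v \in L -> M *m phi k v = phi k v *m M).

Definition finite_pred (T : eqType) (P : T -> Prop) : Prop :=
  exists s : seq T, forall x, P x -> x \in s.

From HB Require Import structures.
From mathcomp Require Import all_boot all_order all_algebra all_fingroup.
From mathcomp Require Import ring.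
Set Implicit Arguments. Unset Strict Implicit. Unset Printing Implicit Defensive.
Import GRing.Theory.
Local Open Scope ring_scope.

(* A matrix commuting with the sign matrix phi(v) has a zero (p, q) entry
   whenever v_p <> v_q.  If the columns of a generator matrix are distinct,
   every two coordinates are separated by a row of it, so the centralizer
   consists of diagonal orthogonal matrices: the 2^n diagonal sign matrices.
   If columns j1 and j2 coincide, all codewords agree on j1 and j2, so every
   rotation of the (j1, j2)-plane centralizes phi(L); in characteristic 0 the
   rational rotations give infinitely many of them. *)

Section Determinant.
Variable R : comPzRingType.

Lemma det1D_mulmxC n m (A : 'M[R]_(n, m)) (B : 'M[R]_(m, n)) :
  \det (1%:M + A *m B) = \det (1%:M + B *m A).
Proof.
pose X := block_mx 1%:M (- A) B 1%:M.
have X_lower : X = block_mx 1%:M 0 B 1%:M *m block_mx 1%:M (- A) 0 (1%:M + B *m A).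
  by rewrite mulmx_block !(mul1mx, mulmx1, mul0mx, addr0, add0r) mulmxN addrCA addNr addr0.
have X_upper : X = block_mx (1%:M + A *m B) (- A) 0 1%:M *m block_mx 1%:M 0 B 1%:M.
  by rewrite mulmx_block !(mul1mx, mulmx1, mul0mx, mulmx0, addr0, add0r) mulNmx addrK.
have := congr1 determinant X_upper; rewrite X_lower !det_mulmx det_lblock !det_ublock.
by rewrite !det1 !mul1r !mulr1 => ->.
Qed.

Lemma det_mx2 (A : 'M[R]_2) :
  \det A = A ord0 ord0 * A ord_max ord_max - A ord0 ord_max * A ord_max ord0.
Proof.
rewrite (expand_det_row _ ord0) !big_ord_recl big_ord0 addr0 /cofactor !det_mx11 !mxE /=.
have -> : lift ord0 (0 : 'I_1) = ord_max :> 'I_2 by apply: val_inj.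
have -> : lift ord_max (0 : 'I_1) = ord0 :> 'I_2 by apply: val_inj.
by rewrite addn0 expr0 expr1 mul1r mulN1r mulrN.
Qed.

End Determinant.

Section CoordinateEmbedding.
Variables (R : comPzRingType) (m n : nat) (f : 'I_m -> 'I_n).

Local Notation P := (rowsub f 1%:M : 'M[R]_(m, n)).

(* Acts as [A] on the coordinates [f a] and as the identity elsewhere. *)
Definition embed_mx (A : 'M[R]_m) : 'M[R]_n := 1%:M + P^T *m (A - 1%:M) *m P.

Lemma tr_embed_mx A : (embed_mx A)^T = embed_mx A^T.
Proof. by rewrite /embed_mx linearD /= trmx1 !trmx_mul trmxK linearB /= trmx1 mulmxA. Qed.

Lemma embed_mx1 : embed_mx 1%:M = 1%:M.
Proof. by rewrite /embed_mx subrr mulmx0 mul0mx addr0. Qed.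

Lemma embed_mx_comm_diag (d : 'rV[R]_n) e A :
  (forall a, d 0 (f a) = e) -> embed_mx A *m diag_mx d = diag_mx d *m embed_mx A.
Proof.
move=> d_f; have P_diag : P *m diag_mx d = e *: P.
  apply/matrixP => a q; rewrite mul_mx_diag !mxE.
  by case: eqP => [<-|_]; rewrite ?d_f ?mulr1 ?mul1r ?mulr0 ?mul0r.
have diag_Ptr : diag_mx d *m P^T = e *: P^T.
  by rewrite -[diag_mx d]tr_diag_mx -trmx_mul P_diag linearZ.
rewrite /embed_mx mulmxDl mulmxDr mul1mx mulmx1 -!mulmxA P_diag !mulmxA diag_Ptr.
by rewrite -!scalemxAl -!scalemxAr.
Qed.

Hypothesis f_inj : injective f.

Lemma rowsub1_mul_tr : P *m P^T = 1%:M.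
Proof.
rewrite trmx_mxsub trmx1 -mxsub_mul mul1mx; apply/matrixP => a b.
by rewrite !mxE (inj_eq f_inj).
Qed.

Lemma embed_mxK A : P *m embed_mx A *m P^T = A.
Proof.
rewrite /embed_mx mulmxDr mulmxDl mulmx1 rowsub1_mul_tr !mulmxA rowsub1_mul_tr mul1mx.
by rewrite -mulmxA rowsub1_mul_tr mulmx1 addrC subrK.
Qed.

Lemma embed_mx_inj : injective embed_mx.
Proof. by move=> A B eqAB; rewrite -(embed_mxK A) eqAB embed_mxK. Qed.

Lemma embed_mxM A B : embed_mx (A *m B) = embed_mx A *m embed_mx B.
Proof.
have conjM X Y : P^T *m X *m P *m (P^T *m Y *m P) = P^T *m (X *m Y) *m P.
  by rewrite !mulmxA -(mulmxA _ P) rowsub1_mul_tr mulmx1.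
have AB1 : A *m B - 1%:M = (A - 1%:M) + (B - 1%:M) + (A - 1%:M) *m (B - 1%:M).
  by rewrite mulmxBl mulmxBr !mul1mx mulmx1 addrA (addrAC (A - 1%:M)) addrK addrC addrA subrK.
rewrite /embed_mx AB1; move: (A - 1%:M) (B - 1%:M) => X Y.
rewrite [RHS]mulmxDl mul1mx [in RHS]mulmxDr mulmx1 conjM !mulmxDr !mulmxDl.
by rewrite !addrA (addrAC 1%:M).
Qed.

Lemma det_embed_mx A : \det (embed_mx A) = \det A.
Proof.
rewrite /embed_mx -mulmxA det1D_mulmxC -mulmxA rowsub1_mul_tr mulmx1.
by rewrite addrC subrK.
Qed.

End CoordinateEmbedding.

Section CharZero.
Variable R : idomainType.
Hypothesis R_pchar0 : [pchar R] =i pred0.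

Lemma natr_inj_pchar0 : injective (fun s : nat => s%:R : R).
Proof.
move=> s t /= eq_st; wlog le_st : s t eq_st / (s <= t)%N.
  move=> W; case: (leqP s t) => [|/ltnW] le; first exact: W.
  exact: esym (W _ _ (esym eq_st) le).
apply/eqP; rewrite eqn_leq le_st /= -subn_eq0 -((pcharf0P R).1 R_pchar0).
by rewrite natrB // eq_st subrr.
Qed.

Lemma sign_F2_inj : injective (fun a : 'F_2 => (-1) ^+ a : R).
Proof.
move=> a b /=; rewrite -[LHS]signr_odd -[RHS]signr_odd !signrE.
move=> /addrI /oppr_inj /natr_inj_pchar0 /double_inj eq_odd.
by apply: val_inj; case: a b eq_odd => [[|[|//]] ?] [[|[|//]] ?].
Qed.

Lemma one_add_natr_sqr_neq0 (s : nat) : 1 + (s%:R : R) ^+ 2 != 0.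
Proof. by rewrite -natrX -[1]/(1%:R : R) -natrD ((pcharf0P R).1 R_pchar0). Qed.

End CharZero.

Lemma ord2P (i : 'I_2) : i = ord0 \/ i = ord_max.
Proof. by case: i => [[|[|//]] ?]; [left|right]; apply: val_inj. Qed.

Section Rotation.
Variable R : fieldType.

(* The Cayley transform of the skew matrix ((0, s), (-s, 0)). *)
Definition rot_mx (s : R) : 'M[R]_2 := (1 + s ^+ 2)^-1 *:
  \matrix_(i, j) (if i == j then 1 - s ^+ 2 else if i == ord0 then s *+ 2 else - s *+ 2).

Lemma rot_mx_orthogonal s : 1 + s ^+ 2 != 0 -> (rot_mx s)^T *m rot_mx s = 1%:M.
Proof.
move=> s_nz; apply/matrixP => i j; rewrite !mxE !big_ord_recl big_ord0 !mxE.
by case: (ord2P i) => ->; case: (ord2P j) => ->; rewrite /=; field.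
Qed.

Lemma det_rot_mx s : 1 + s ^+ 2 != 0 -> \det (rot_mx s) = 1.
Proof. by move=> s_nz; rewrite det_mx2 !mxE /=; field. Qed.

Hypothesis R_pchar0 : [pchar R] =i pred0.

Lemma cayley_ratio_inj (a b : R) : 1 + a != 0 -> 1 + b != 0 ->
  (1 - a) / (1 + a) = (1 - b) / (1 + b) -> a = b.
Proof.
move=> a_nz b_nz /eqP; rewrite eqr_div // => /eqP eq_ab.
have two_neq0 : (2%:R : R) != 0 by rewrite ((pcharf0P R).1 R_pchar0).
have : (b - a) * 2%:R = (1 - a) * (1 + b) - (1 - b) * (1 + a) by ring.
by rewrite eq_ab subrr => /eqP; rewrite mulf_eq0 (negPf two_neq0) orbF subr_eq0 => /eqP.
Qed.

Lemma rot_mx_natr_inj : injective (fun s : nat => rot_mx s%:R).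
Proof.
move=> s t /= /matrixP /(_ ord0 ord0); rewrite !mxE /= !(mulrC (_^-1)).
move/cayley_ratio_inj; rewrite !one_add_natr_sqr_neq0 // -!natrX => /(_ isT isT).
by move/(natr_inj_pchar0 R_pchar0)/eqP; rewrite eqn_sqr => /eqP.
Qed.

End Rotation.

Lemma finite_pred_image (T : eqType) (I : finType) (h : I -> T) (P : T -> Prop) :
  (forall x, P x -> exists i, x = h i) -> finite_pred P.
Proof. by move=> Ph; exists (map h (enum I)) => x /Ph [i ->]; rewrite map_f ?mem_enum. Qed.

Lemma not_finite_pred_inj (T : eqType) (P : T -> Prop) (h : nat -> T) :
  injective h -> (forall s, P (h s)) -> ~ finite_pred P.
Proof.
move=> h_inj Ph [xs Pxs].
have : (size (map h (iota 0 (size xs).+1)) <= size xs)%N.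
  by apply: uniq_leq_size => [|_ /mapP[s _ ->]]; rewrite ?map_inj_uniq ?iota_uniq ?Pxs.
by rewrite size_map size_iota ltnn.
Qed.

Section DiagonalMatrices.
Variable R : idomainType.

Lemma comm_diag_mx_eq0 n (M : 'M[R]_n) (d : 'rV[R]_n) p q :
  M *m diag_mx d = diag_mx d *m M -> d 0 p != d 0 q -> M p q = 0.
Proof.
move=> /matrixP /(_ p q) comm_pq dpq; move: comm_pq.
rewrite mul_mx_diag mul_diag_mx !mxE mulrC => /eqP.
by rewrite -subr_eq0 -mulrBl mulf_eq0 subr_eq0 eq_sym (negPf dpq) => /eqP.
Qed.

Lemma orthogonal_diag_mx_sign n (M : 'M[R]_n) :
  M^T *m M = 1%:M -> (forall p q, p != q -> M p q = 0) ->
  exists b : {ffun 'I_n -> bool}, M = diag_mx (\row_i (-1) ^+ b i).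
Proof.
move=> /matrixP M_orth M_diag; exists [ffun i => M i i != 1].
apply/matrixP => p q; rewrite !mxE ffunE.
have [<-|pq] := eqVneq p q; last by rewrite M_diag // mulr0n.
have /eqP : M p p ^+ 2 = 1.
  move: (M_orth p p); rewrite !mxE eqxx (bigD1 p) //= big1 ?addr0 => [|l lp]; rewrite !mxE.
    by rewrite expr2 => ->.
  by rewrite M_diag ?mul0r.
rewrite sqrf_eq1 mulr1n => /orP[]/eqP ->; rewrite ?eqxx //.
by case: eqP => // /esym/eqP; rewrite -subr_eq0 opprK.
Qed.

End DiagonalMatrices.

Section GeneratorMatrix.
Variables (n m : nat) (L : {set 'rV['F_2]_n}) (G : 'M['F_2]_(m, n)).
Hypothesis hG : generator_matrix G L.

Lemma generator_row_mem r : row r G \in L.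
Proof. by apply/hG; exact: row_sub. Qed.

Lemma generator_coord_eq j1 j2 v : col j1 G = col j2 G -> v \in L -> v 0 j1 = v 0 j2.
Proof.
move=> eq_col /hG /submxP[w ->].
move: (congr1 (mulmx w) eq_col); rewrite !colE !mulmxA -!colE.
by move=> /matrixP /(_ 0 0); rewrite !mxE.
Qed.

Lemma distinct_columns_row_neq : distinct_columns G ->
  forall j1 j2, j1 != j2 -> [exists r, G r j1 != G r j2].
Proof.
move=> dG j1 j2; apply: contraNT => /existsPn G_eq.
by apply/eqP/dG/matrixP => r ?; rewrite !mxE; apply/eqP/negPn/G_eq.
Qed.

End GeneratorMatrix.

Section Centralizer.
Variables (k : fieldType) (n : nat) (L : {set 'rV['F_2]_n}).

Lemma embed_mx_centralizer_SO m (f : 'I_m -> 'I_n) (A : 'M[k]_m) :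
  injective f -> inSO A -> (forall v, v \in L -> exists c, forall a, v 0 (f a) = c) ->
  centralizer_SO L (embed_mx f A).
Proof.
move=> f_inj /andP[/eqP A_orth /eqP detA] L_const; split.
  by rewrite /inSO tr_embed_mx -embed_mxM // A_orth embed_mx1 det_embed_mx // detA !eqxx.
move=> v /L_const [c v_f]; apply: (embed_mx_comm_diag (e := (-1) ^+ c)) => a.
by rewrite mxE v_f.
Qed.

Hypothesis k_pchar0 : [pchar k] =i pred0.
Variables (m : nat) (G : 'M['F_2]_(m, n)).
Hypothesis hG : generator_matrix G L.

Lemma finite_centralizer_SO : distinct_columns G -> finite_pred (@centralizer_SO k n L).
Proof.
move=> dG; apply: finite_pred_image => M [/andP[/eqP M_orth _] M_comm].
apply: orthogonal_diag_mx_sign => // p q pq.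
have /existsP[r Gpq] := distinct_columns_row_neq dG pq.
apply: comm_diag_mx_eq0 (M_comm _ (generator_row_mem hG r)) _.
by rewrite !mxE; apply: contra Gpq => /eqP /(sign_F2_inj k_pchar0) ->.
Qed.

Lemma not_finite_centralizer_SO j1 j2 :
  j1 != j2 -> col j1 G = col j2 G -> ~ finite_pred (@centralizer_SO k n L).
Proof.
move=> ne eq_col; pose f (a : 'I_2) := if a == ord0 then j1 else j2.
have f_inj : injective f.
  move=> a b; rewrite /f; case: (ord2P a) => ->; case: (ord2P b) => -> //= eq_j;
  by move: ne; rewrite eq_j eqxx.
apply: (not_finite_pred_inj (h := fun s : nat => embed_mx f (rot_mx s%:R))).
  by move=> s t /(embed_mx_inj f_inj) /(rot_mx_natr_inj k_pchar0).
move=> s; apply: embed_mx_centralizer_SO => //.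
  by rewrite /inSO rot_mx_orthogonal ?det_rot_mx ?one_add_natr_sqr_neq0 ?eqxx.
move=> v vL; exists (v 0 j1) => a; rewrite /f; case: eqP => // _.
exact/esym/(generator_coord_eq hG).
Qed.

End Centralizer.

Theorem lemma8p15 (k : closedFieldType) (hk : [pchar k] =i pred0)
  (n : nat) (L : {set 'rV['F_2]_n}) (hL : doubly_even L)
  (m : nat) (G : 'M['F_2]_(m, n)) (hG : generator_matrix G L) :
  finite_pred (@centralizer_SO k n L) <-> distinct_columns G.
Proof.
split=> [fin_C j1 j2 eq_col | dG]; last exact: finite_centralizer_SO.
have [//|ne] := eqVneq j1 j2.
by case: (not_finite_centralizer_SO hk hG ne eq_col fin_C).
Qed.
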